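(* Let $\alpha=(\alpha_\pi)_{\pi\in\mathcal P}$ and $\beta=(\beta_\pi)_{\pi\in\mathcal P}$ be admissible families of weights. Then $\alpha=\beta$ if and only if $\alpha_\sigma=\beta_\sigma$ for every partition $\sigma\in\mathcal P(\mathbf f)$ with exactly two blocks and $\mathbf f\in\mathcal F^n$, $n\le 4$.
   Context: Fix a finite set $\mathcal F$ of faces. For a word $\mathbf f\in\mathcal F^n$ ($n\ge1$), $[n]_{\mathbf f}$ is $\{1,\dots,n\}$ with faces $\ell\mapsto\mathbf f(\ell)$ (elements are called legs); $\mathcal P(\mathbf f)$ is the set of set partitions of $[n]$, viewed with these faces, and $\mathcal P=\bigcup_{\mathbf f}\mathcal P(\mathbf f)$. A finite totally ordered set $S$ with a face map is identified with $[m]_{|S|}$ through the order-preserving bijection ($|S|$ = word of faces read in order), so partitions of such sets are elements of $\mathcal P$. $1_{\mathbf f}$ is the one-block partition. For blocks $\beta_1\ne\beta_2$ of $\pi$, $\pi_{\beta_1\smile\beta_2}=(\pi\setminus\{\beta_1,\beta_2\})\cup\{\beta_1\cup\beta_2\}$, and $\{\beta_1,\beta_2\}$ is regarded as a partition of the multi-faced set $\beta_1\cup\beta_2$. Reduction: for $\pi\in\mathcal P(\mathbf f)$ let $s\sim t$ ($s\le t$) iff all $r\in[s,t]$ have the same face and lie in the same block; $\pi_{\mathrm{red}}$ is the induced partition of the quotient $[n]/\sim$ (classes are intervals, ordered naturally, with their common face). Mirror: $\overline{\mathbf f}(i)=\mathbf f(n+1-i)$, $\overline\pi=\{\{n+1-i:i\in\beta\}:\beta\in\pi\}\in\mathcal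 P(\overline{\mathbf f})$. A family $\alpha=(\alpha_\pi)_{\pi\in\mathcal P}$ of complex numbers is admissible if: (i) $\alpha_{1_{\mathbf f}}=1$ for all $\mathbf f$; (ii) $\alpha_{\{\{1\},\{2\}\}}=1$ for every $\mathbf f\in\mathcal F^2$; (iii) $\alpha_\pi=\alpha_{\pi_{\mathrm{red}}}$; (iv) if $\pi\in\mathcal P(\mathbf f)$ has blocks $\beta_1\ne\beta_2$ with $i\in\beta_1$, $i+1\in\beta_2$, $\mathbf f(i)=\mathbf f(i+1)$, then $\alpha_\pi=\alpha_{\pi_{\beta_1\smile\beta_2}}\alpha_{\{\beta_1,\beta_2\}}$; (v) $\alpha_\pi=\alpha_\sigma$ whenever $\pi\in\mathcal P(\mathbf f)$, $\sigma\in\mathcal P(\mathbf g)$ have the same underlying set partition of $[n]$ and $\mathbf f(\ell)=\mathbf g(\ell)$ for $1<\ell<n$; (vi) $\alpha_{\overline\pi}=\overline{\alpha_\pi}$. *)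

From mathcomp Require Import all_boot all_order all_algebra.
Set Implicit Arguments. Unset Strict Implicit. Unset Printing Implicit Defensive.
Import Order.TTheory GRing.Theory Num.Theory.

(* Legs of [n] are 'I_n (0-indexed: leg l corresponds to paper's l+1).
   A set partition of [n] is a pi : {set {set 'I_n}} with
   partition pi [set: 'I_n] (mathcomp: blocks nonempty, disjoint, covering). *)

(* A family of weights: for every n, word f and set partition pi of [n]_f,
   a number alpha n f pi.  Values on non-partitions are irrelevant. *)
Definition weight_family (F : finType) (C : Type) :=
  forall n : nat, {ffun 'I_n -> F} -> {set {set 'I_n}} -> C.

Section Defs.
Variables (F : finType).

(* A subset S of [n], ordered naturally, identified with [#|S|] through the
   order-preserving bijection enum_val (enum S lists S increasingly). *)
Definition sub_word n (f : {ffun 'I_n -> F}) (S : {set 'I_n})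
  : {ffun 'I_#|S| -> F} := [ffun j => f (enum_val j)].

Definition sub_part n (S : {set 'I_n}) (P : {set {set 'I_n}})
  : {set {set 'I_#|S|}} :=
  [set [set j : 'I_#|S| | enum_val j \in B] | B : {set 'I_n} in [set B in P | B :&: S != set0]].

Definition one_part n : {set {set 'I_n}} := [set [set: 'I_n]].

Definition merge n (pi : {set {set 'I_n}}) (b1 b2 : {set 'I_n}) :=
  ((pi :\ b1) :\ b2) :|: [set b1 :|: b2].

Definition linked n (f : {ffun 'I_n -> F}) (pi : {set {set 'I_n}}) (i j : 'I_n) :=
  (f i == f j) && (pblock pi i == pblock pi j).

(* Leftmost representatives of the ~-classes (classes are the maximal
   intervals of consecutive legs with equal face lying in one block). *)
Definition red_reps n (f : {ffun 'I_n -> F}) (pi : {set {set 'I_n}}) : {set 'I_n} :=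
  [set s : 'I_n | [forall t : 'I_n, (t.+1 == s :> nat) ==> ~~ linked f pi t s]].

(* pi_red as a partition of the quotient [n]/~ (identified with the ordered
   set of class representatives) together with its word *)
Definition red_word n (f : {ffun 'I_n -> F}) (pi : {set {set 'I_n}}) :=
  sub_word f (red_reps f pi).
Definition red_part n (f : {ffun 'I_n -> F}) (pi : {set {set 'I_n}}) :=
  sub_part (red_reps f pi) pi.

Definition mirror_word n (f : {ffun 'I_n -> F}) : {ffun 'I_n -> F} :=
  [ffun i => f (rev_ord i)].
Definition mirror_part n (pi : {set {set 'I_n}}) : {set {set 'I_n}} :=
  [set (@rev_ord n) @: B | B : {set 'I_n} in pi].

Definition admissible (C : numClosedFieldType) (alpha : weight_family F C) : Prop :=
  (* (i) *)
  (forall n (f : {ffun 'I_n -> F}), 0 < n -> alpha n f (one_part n) = 1%R) /\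
  (* (ii) *)
  (forall f : {ffun 'I_2 -> F}, alpha 2 f [set [set i] | i : 'I_2] = 1%R) /\
  (* (iii) *)
  (forall n (f : {ffun 'I_n -> F}) (pi : {set {set 'I_n}}),
      0 < n -> partition pi [set: 'I_n] ->
      alpha n f pi = alpha _ (red_word f pi) (red_part f pi)) /\
  (* (iv) *)
  (forall n (f : {ffun 'I_n -> F}) (pi : {set {set 'I_n}}) (b1 b2 : {set 'I_n})
          (i j : 'I_n),
      0 < n -> partition pi [set: 'I_n] ->
      b1 \in pi -> b2 \in pi -> b1 != b2 ->
      i \in b1 -> j \in b2 -> j = i.+1 :> nat -> f i = f j ->
      alpha n f pi =
        (alpha n f (merge pi b1 b2) *
         alpha _ (sub_word f (b1 :|: b2)) (sub_part (b1 :|: b2) [set b1; b2]))%R) /\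
  (* (v) *)
  (forall n (f g : {ffun 'I_n -> F}) (pi : {set {set 'I_n}}),
      0 < n -> partition pi [set: 'I_n] ->
      (forall l : 'I_n, 0 < l < n.-1 -> f l = g l) ->
      alpha n f pi = alpha n g pi) /\
  (* (vi) *)
  (forall n (f : {ffun 'I_n -> F}) (pi : {set {set 'I_n}}),
      0 < n -> partition pi [set: 'I_n] ->
      alpha n (mirror_word f) (mirror_part pi) = (alpha n f pi)^*%R).

(* equality of families as families indexed by P = U_f P(f), n >= 1 *)
Definition fam_eq (C : Type) (alpha beta : weight_family F C) : Prop :=
  forall n (f : {ffun 'I_n -> F}) (pi : {set {set 'I_n}}),
    0 < n -> partition pi [set: 'I_n] -> alpha n f pi = beta n f pi.

End Defs.

From Pilot Require Import Defs.
From mathcomp Require Import all_boot all_order all_algebra zify.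
Import GRing.Theory.

(* Encode a word with a set partition as a list of legs.  Axioms (iii)-(v)
   become local moves on such lists: the faces of the end legs are
   irrelevant, equal adjacent legs can be merged, and at two adjacent legs
   with equal faces in different blocks the weight factors as (weight with the
   two blocks merged) * (weight of the two-block restriction).  Agreement then
   spreads from the small two-block partitions by induction on the length and
   the number of blocks.  With three or more blocks, give the first leg the
   face of the second and factor there: one factor has fewer blocks, the other
   is shorter because a third block is dropped.  With two blocks and at least
   five legs, some block occurs twice after the first two legs; cutting it at
   the first of these occurrences into a fresh block keeps the weight, since
   the factor produced by the cut is a two-block weight equal to 1 by (ii),
   and factoring at the first two legs then yields two shorter lists. *)

(** * Set partitions *)

Lemma eq_preim_partition {T : finType} {rT rT' : eqType} (f : T -> rT) (f' : T -> rT')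
    (D : {set T}) :
  (forall x y, (f x == f y) = (f' x == f' y)) -> preim_partition f D = preim_partition f' D.
Proof. by move=> ff'; apply: eq_imset => x; apply/setP => y; rewrite !inE ff'. Qed.

Lemma size_undup_map_in {T1 T2 : eqType} (f : T1 -> T2) (s : seq T1) :
  {in s &, injective f} -> size (undup (map f s)) = size (undup s).
Proof.
move=> f_inj; rewrite -(size_map f (undup s)); apply/perm_size/uniq_perm.
- exact: undup_uniq.
- by rewrite map_inj_in_uniq ?undup_uniq // => x y; rewrite !mem_undup; apply: f_inj.
- move=> y; rewrite mem_undup.
  by apply/mapP/mapP => -[x xs ->]; exists x; rewrite ?mem_undup in xs *.
Qed.

Lemma card_preim_partition {T : finType} {rT : eqType} (f : T -> rT) :
  #|preim_partition f [set: T]| = size (undup (map f (enum T))).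
Proof.
pose fiber y := [set x | y == f x].
have -> : preim_partition f [set: T] = [set fiber (f x) | x in [set: T]].
  by apply: eq_imset => x; apply/setP => y; rewrite !inE.
rewrite imset_card -(eq_card (mem_undup _)) (card_uniqP (undup_uniq _)).
rewrite /image_mem (map_comp fiber f) size_undup_map_in; last first.
  by move=> _ b /mapP[x _ ->] _ /setP/(_ x); rewrite !inE eqxx => /esym/eqP.
by congr (size (undup (map f _))); apply: eq_enum => x; rewrite inE.
Qed.

Lemma preim_partition_id n :
  preim_partition (@id 'I_n) [set: 'I_n] = [set [set i] | i : 'I_n].
Proof.
apply/setP => B; apply/imsetP/imsetP => -[i _ ->]; exists i => //.
all: by apply/setP => j; rewrite !inE eq_sym.
Qed.

Lemma sub_part_pblock {n} (P : {set {set 'I_n}}) (S : {set 'I_n}) :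
  partition P [set: 'I_n] ->
  sub_part S P = preim_partition (fun j : 'I_#|S| => pblock P (enum_val j)) [set: 'I_#|S|].
Proof.
case/and3P=> /eqP coverP tiP _; have inP x : x \in cover P by rewrite coverP inE.
apply/setP => X; apply/imsetP/imsetP => [[B]|[j _ ->]].
  rewrite inE => /andP[PB /set0Pn[x /setIP[Bx Sx]]] ->.
  exists (enum_rank_in Sx x) => //; apply/setP => j.
  by rewrite !inE enum_rankK_in // -(def_pblock tiP PB Bx) eq_pblock ?inP.
exists (pblock P (enum_val j)).
  rewrite inE pblock_mem //=; apply/set0Pn; exists (enum_val j).
  by rewrite inE mem_pblock inP enum_valP.
by apply/setP => j'; rewrite !inE eq_pblock ?inP.
Qed.

Lemma sub_part_subset {n} (P Q : {set {set 'I_n}}) (S : {set 'I_n}) :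
  trivIset P -> Q \subset P -> S \subset cover Q -> sub_part S Q = sub_part S P.
Proof.
move=> tiP sQP sSQ; rewrite /sub_part.
suff -> : [set B in Q | B :&: S != set0] = [set B in P | B :&: S != set0] by [].
apply/setP => B; rewrite !inE.
apply/andP/andP => -[QB SB]; split=> //; first exact: (subsetP sQP).
have /set0Pn[x /setIP[Bx /(subsetP sSQ)/bigcupP[B' QB' B'x]]] := SB.
by rewrite -(def_pblock tiP QB Bx) (def_pblock tiP (subsetP sQP _ QB') B'x).
Qed.

Lemma merge_preim_partition {n} (h : 'I_n -> nat) (i j : 'I_n) : h i != h j ->
  Defs.merge (preim_partition h [set: 'I_n])
    [set k in [set: 'I_n] | h i == h k] [set k in [set: 'I_n] | h j == h k] =
  preim_partition (fun k => if h k == h j then h i else h k) [set: 'I_n].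
Proof.
move=> hij; pose h' k := if h k == h j then h i else h k.
pose fiber k := [set k' in [set: 'I_n] | h k == h k'].
change (Defs.merge (preim_partition h [set: 'I_n]) (fiber i) (fiber j) =
  preim_partition h' [set: 'I_n]).
have fiber_merged k : h k \in [:: h i; h j] ->
    [set k' in [set: 'I_n] | h' k == h' k'] = fiber i :|: fiber j.
  move=> hk; apply/setP => k'; rewrite !inE /h'.
  have -> : (if h k == h j then h i else h k) = h i.
    by move: hk; rewrite !inE => /orP[] /eqP ->; rewrite ?eqxx // (negbTE hij).
  case: (h k' =P h j) => [->|/eqP ne]; rewrite ?eqxx ?orbT //.
  by rewrite [h j == _]eq_sym (negbTE ne) orbF.
have fiber_other k : h k \notin [:: h i; h j] ->
    [set k' in [set: 'I_n] | h' k == h' k'] = fiber k.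
  rewrite !inE negb_or => /andP[hki hkj]; apply/setP => k'; rewrite !inE /h' (negbTE hkj).
  by case: (h k' =P h j) => [->|//]; rewrite (negbTE hkj) (negbTE hki).
have fiberE k k' : (fiber k == fiber k') = (h k == h k').
  apply/eqP/eqP => [/setP/(_ k')|hkk']; first by rewrite !inE !eqxx => /eqP.
  by apply/setP => x; rewrite !inE hkk'.
apply/setP => B; rewrite /Defs.merge !inE; apply/idP/imsetP.
  case/orP => [/and3P[nB2 nB1 /imsetP[k _ Bk]]|/eqP ->]; last first.
    by exists i; rewrite ?fiber_merged // mem_head.
  have {}Bk : B = fiber k := Bk.
  exists k => //; rewrite fiber_other ?Bk // !inE -!(fiberE k) -Bk.
  by rewrite negb_or nB1 nB2.
case=> k _ ->; have [hk|hk] := boolP (h k \in [:: h i; h j]).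
  by rewrite fiber_merged ?eqxx ?orbT.
rewrite fiber_other //; move: hk; rewrite !inE -!(fiberE k) !(eq_sym (fiber k)).
by case/norP => -> ->; rewrite imset_f.
Qed.

Fixpoint undup_adj_from {T : eqType} (x : T) (s : seq T) : seq T :=
  if s is y :: s' then
    if y == x then undup_adj_from x s' else y :: undup_adj_from y s'
  else [::].

Definition undup_adj {T : eqType} (s : seq T) :=
  if s is x :: s' then x :: undup_adj_from x s' else [::].

Lemma undup_adj_dup {T : eqType} (a b : seq T) (z : T) :
  undup_adj (a ++ z :: z :: b) = undup_adj (a ++ z :: b).
Proof.
have from_dup x a' :
    undup_adj_from x (a' ++ z :: z :: b) = undup_adj_from x (a' ++ z :: b).
  elim: a' x => [|y a' IH] x /=; last by rewrite !IH.
  by rewrite eqxx; case: eqP => // ->.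
by case: a => [|x a] /=; rewrite ?eqxx ?from_dup.
Qed.

Lemma undup_adjE {T : eqType} (x0 : T) (s : seq T) :
  undup_adj s =
  [seq nth x0 s i | i <- iota 0 (size s) & (i == 0) || (nth x0 s i.-1 != nth x0 s i)].
Proof.
have shift (U : Type) (f : nat -> U) (P : pred nat) n m :
    [seq f i | i <- iota m.+1 n & P i] = [seq f i.+1 | i <- iota m n & P i.+1].
  by elim: n m => //= n IH m; case: (P m.+1) => /=; rewrite IH.
have fromE x t : undup_adj_from x t =
    [seq nth x0 t i | i <- iota 0 (size t) & nth x0 (x :: t) i != nth x0 t i].
  elim: t x => [|y t IH] x //=; rewrite eq_sym.
  by case: eqP => [->|_] /=; rewrite IH shift.
by case: s => [|x t] //=; rewrite fromE shift.
Qed.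

(** * Lists of legs *)

Section Legs.
Context {F : finType} (x0 : F).

(* A leg is a pair (face, block label); a list of legs encodes a word
   together with the partition of its positions by label. *)
Local Notation leg := (F * nat)%type.
Local Notation leg0 := (x0, 0%N).

Definition face (s : seq leg) i := (nth leg0 s i).1.
Definition label (s : seq leg) i := (nth leg0 s i).2.
Definition word_of s : {ffun 'I_(size s) -> F} := [ffun i : 'I_(size s) => face s i].
Definition part_of s :=
  preim_partition (fun i : 'I_(size s) => label s i) [set: 'I_(size s)].
Definition nblocks (s : seq leg) := size (undup (map snd s)).

Lemma partition_part_of s : partition (part_of s) [set: 'I_(size s)].
Proof. exact: preim_partitionP. Qed.

Lemma mem_pblock_part_of s (i j : 'I_(size s)) :
  (j \in pblock (part_of s) i) = (label s i == label s j).
Proof. by rewrite pblock_equivalence_partition // => ? ? ? _ _ _; split=> // /eqP ->. Qed.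

Lemma eq_pblock_part_of s (i j : 'I_(size s)) :
  (pblock (part_of s) i == pblock (part_of s) j) = (label s i == label s j).
Proof.
have [/eqP cover_part ti _] := and3P (partition_part_of s).
by rewrite eq_pblock // ?cover_part ?inE // mem_pblock_part_of.
Qed.

Lemma card_part_of s : #|part_of s| = nblocks s.
Proof.
rewrite card_preim_partition /nblocks; congr (size (undup _)).
rewrite (map_comp (label s) val) val_enum_ord (map_comp snd (nth leg0 s)).
by rewrite -/(mkseq _ _) mkseq_nth.
Qed.

Lemma label_nth_map s i : label s i = nth 0%N (map snd s) i.
Proof. by elim: s i => [|w s IH] [|i] //=; rewrite /label /= -IH. Qed.

Definition sub_legs s (S : {set 'I_(size s)}) := [seq nth leg0 s (val i) | i <- enum S].

Lemma size_sub_legs s (S : {set 'I_(size s)}) : size (sub_legs s S) = #|S|.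
Proof. by rewrite size_map cardE. Qed.

Lemma nth_sub_legs s (S : {set 'I_(size s)}) (j : 'I_#|S|) :
  nth leg0 (sub_legs s S) j = nth leg0 s (enum_val j).
Proof. by rewrite (nth_map (enum_val j)) -?enum_val_nth // -cardE. Qed.

Lemma sub_legs_pred s (q : pred nat) :
  sub_legs s [set i : 'I_(size s) | q i] = [seq nth leg0 s i | i <- iota 0 (size s) & q i].
Proof.
rewrite /sub_legs (map_comp (nth leg0 s) val) -val_enum_ord filter_map.
congr (map _ (map _ _)).
by rewrite enumT /enum_mem; apply: eq_filter => i; rewrite !inE.
Qed.

Lemma sub_legs_filter s (P : pred leg) :
  sub_legs s [set i : 'I_(size s) | P (nth leg0 s i)] = filter P s.
Proof.
by rewrite (sub_legs_pred s (fun i => P (nth leg0 s i))) -filter_map -/(mkseq _ _) mkseq_nth.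
Qed.

Definition relabel (l l' : nat) (s : seq leg) :=
  [seq (w.1, if w.2 == l then l' else w.2) | w <- s].

Definition restrict_blocks (ls : seq nat) (s : seq leg) := [seq w <- s | w.2 \in ls].

Lemma relabel_id l l' s : l \notin map snd s -> relabel l l' s = s.
Proof.
elim: s => [|[a k] s IH] //=; rewrite inE negb_or eq_sym => /andP[kl /IH ->].
by rewrite (negbTE kl).
Qed.

Lemma relabelK l l' s : l' \notin map snd s -> relabel l' l (relabel l l' s) = s.
Proof.
elim: s => [|[a k] s IH] //=; rewrite inE negb_or eq_sym => /andP[kl' /IH ->].
by case: (k =P l) => [->|_]; rewrite ?eqxx // (negbTE kl').
Qed.

Lemma relabel_notin l l' s : l != l' -> l \notin map snd (relabel l l' s).
Proof.
move=> ll'; apply/mapP => -[_ /mapP[w _ ->] /=].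
by case: eqP => [_ /eqP|wl /esym]; rewrite ?(negbTE ll').
Qed.

Lemma nblocks_relabel l l' s : l \in map snd s -> l' \in map snd s -> l != l' ->
  nblocks (relabel l l' s) < nblocks s.
Proof.
move=> ls l's ll'; have uniq_labels := undup_uniq (map snd s).
have : nblocks (relabel l l' s) <= size (rem l (undup (map snd s))).
  apply: uniq_leq_size; first exact: undup_uniq.
  move=> k; rewrite mem_undup (mem_rem_uniq _ uniq_labels) => /mapP[_ /mapP[w ws ->] ->] /=.
  rewrite !inE mem_undup; case: ifP => [_|/negbT wl]; first by rewrite eq_sym ll' l's.
  by rewrite wl; apply: map_f.
have nblocks_gt0 : 0 < nblocks s.
  by rewrite -has_predT; apply/hasP; exists l; rewrite ?mem_undup.
by rewrite size_rem ?mem_undup // => /leq_ltn_trans; apply; rewrite ltn_predL.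
Qed.

Lemma has_label_notin (ls : seq nat) s :
  size ls < nblocks s -> has (fun w => w.2 \notin ls) s.
Proof.
apply: contraTT => /hasPn all_in; rewrite -leqNgt.
apply: uniq_leq_size; first exact: undup_uniq.
by move=> k; rewrite mem_undup => /mapP[w /all_in]; rewrite negbK => + ->.
Qed.

Lemma size_restrict_blocks_lt ls s :
  has (fun w => w.2 \notin ls) s -> size (restrict_blocks ls s) < size s.
Proof.
move=> has_out; rewrite size_filter -[ltnRHS](count_predC (fun w => w.2 \in ls)).
by rewrite -[ltnLHS]addn0 ltn_add2l -has_count.
Qed.

(** * Weights of admissible families *)

Context {C : numClosedFieldType}.

Definition wt (alpha : weight_family F C) s := alpha (size s) (word_of s) (part_of s).

Section AdmissibleWeight.
Context {alpha : weight_family F C}.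

Lemma wt_preim (rT : eqType) m (g : {ffun 'I_m -> F}) (h : 'I_m -> rT) s :
  size s = m -> (forall j : 'I_m, g j = face s j) ->
  (forall j j' : 'I_m, (h j == h j') = (label s j == label s j')) ->
  alpha m g (preim_partition h [set: 'I_m]) = wt alpha s.
Proof.
move=> sm; subst m => g_face h_label.
rewrite /wt /part_of (eq_preim_partition h (fun j : 'I_(size s) => label s j) _ h_label).
by congr alpha; apply/ffunP => j; rewrite ffunE.
Qed.

Lemma wt_sub_legs s (S : {set 'I_(size s)}) :
  alpha _ (sub_word (word_of s) S) (sub_part S (part_of s)) = wt alpha (sub_legs s S).
Proof.
rewrite sub_part_pblock ?partition_part_of //; apply: wt_preim => [|j|j j'].
- exact: size_sub_legs.
- by rewrite !ffunE /face nth_sub_legs.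
- by rewrite eq_pblock_part_of /label !nth_sub_legs.
Qed.

Hypothesis adm : admissible alpha.

Lemma wt_singleton x : wt alpha [:: x] = 1%R.
Proof.
have [one _] := adm; rewrite -(one 1%N (word_of [:: x])) //; congr alpha.
have [/eqP cover_part _ _] := and3P (partition_part_of [:: x]).
have /cards1P[B partB] : #|part_of [:: x]| == 1%N by rewrite card_part_of.
by move: cover_part; rewrite partB cover1 => ->.
Qed.

Lemma wt_pair x y : x.2 != y.2 -> wt alpha [:: x; y] = 1%R.
Proof.
move=> xy; have [_ [two _]] := adm.
rewrite -(two (word_of [:: x; y])) -preim_partition_id; symmetry.
apply: wt_preim => // [j|j j']; first by rewrite ffunE.
rewrite -val_eqE /label; case: j j' => [[|[|//]] ?] [[|[|//]] ?] /=; rewrite ?eqxx //.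
  exact/esym/negbTE.
by apply/esym/negbTE; rewrite eq_sym.
Qed.

Lemma wt_eq_inner s s' :
  size s = size s' -> map snd s = map snd s' ->
  (forall i, 0 < i < (size s).-1 -> face s i = face s' i) ->
  wt alpha s = wt alpha s'.
Proof.
move=> ss' labels_ss' faces_ss'; have [_ [_ [_ [_ [inner _]]]]] := adm.
have [s_nil | s_gt0] := posnP (size s).
  by move: ss'; rewrite s_nil => /esym/size0nil ->; move/size0nil: s_nil ->.
have -> : wt alpha s' = alpha (size s) [ffun i : 'I_(size s) => face s' i] (part_of s).
  symmetry; apply: wt_preim => // [j|j j']; first by rewrite ffunE.
  by rewrite !label_nth_map labels_ss'.
apply: inner => // [|i /faces_ss']; [exact: partition_part_of | by rewrite !ffunE].
Qed.

Lemma wt_face_head a b l t : wt alpha ((a, l) :: t) = wt alpha ((b, l) :: t).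
Proof. by apply: wt_eq_inner => // -[]. Qed.

Lemma wt_face_last t a b l : wt alpha (rcons t (a, l)) = wt alpha (rcons t (b, l)).
Proof.
apply: wt_eq_inner; rewrite ?size_rcons ?map_rcons // => i /andP[_ i_lt].
by rewrite /face !nth_rcons i_lt.
Qed.

Lemma red_reps_legs s :
  red_reps (word_of s) (part_of s) =
  [set i : 'I_(size s) | (i == 0%N :> nat) || (nth leg0 s i.-1 != nth leg0 s i)].
Proof.
apply/setP => j; rewrite !inE.
have linkedE (i : 'I_(size s)) :
    linked (word_of s) (part_of s) i j = (nth leg0 s i == nth leg0 s j).
  by rewrite /linked eq_pblock_part_of !ffunE /face /label -xpair_eqE -!surjective_pairing.
case: j linkedE => [[|j] lt_j] linkedE /=; first exact/forallP.
apply/forallP/idP => [/(_ (Ordinal (ltnW lt_j)))|neq_j i]; first by rewrite eqxx linkedE.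
by apply/implyP => /eqP [i_j]; rewrite linkedE /= i_j.
Qed.

Lemma wt_undup_adj s : 0 < size s -> wt alpha s = wt alpha (undup_adj s).
Proof.
move=> s_gt0; have [_ [_ [red _]]] := adm.
rewrite {1}/wt (red _ _ _ s_gt0 (partition_part_of s)) /red_word /red_part red_reps_legs.
rewrite wt_sub_legs (undup_adjE leg0).
by rewrite (sub_legs_pred s (fun i => (i == 0%N) || (nth leg0 s i.-1 != nth leg0 s i))).
Qed.

Lemma wt_dup a z b : wt alpha (a ++ z :: z :: b) = wt alpha (a ++ z :: b).
Proof.
rewrite wt_undup_adj ?size_cat ?addnS // [RHS]wt_undup_adj ?size_cat ?addnS //.
by rewrite undup_adj_dup.
Qed.

Lemma wt_factor p u v q : u.1 = v.1 -> u.2 != v.2 ->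
  wt alpha (p ++ u :: v :: q) =
  (wt alpha (relabel v.2 u.2 (p ++ u :: v :: q)) *
   wt alpha (restrict_blocks [:: u.2; v.2] (p ++ u :: v :: q)))%R.
Proof.
move=> face_uv label_uv; set s := p ++ _.
have lt_u : size p < size s by rewrite size_cat /= addnS ltnS leq_addr.
have lt_v : (size p).+1 < size s by rewrite size_cat /= !addnS !ltnS leq_addr.
pose i := Ordinal lt_u; pose j := Ordinal lt_v.
have nth_i : nth leg0 s i = u by rewrite nth_cat ltnn subnn.
have nth_j : nth leg0 s j = v by rewrite nth_cat ltnNge leqnSn /= subSnn.
pose fiber (k : 'I_(size s)) := [set k' in [set: 'I_(size s)] | label s k == label s k'].
have fiber_part k : fiber k \in part_of s by apply/imsetP; exists k.
have [_ [_ [_ [merge_rule _]]]] := adm.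
rewrite {1}/wt (merge_rule _ _ _ (fiber i) (fiber j) i j) ?partition_part_of //; last first.
- by rewrite !ffunE /face nth_i nth_j.
- by rewrite /fiber !inE eqxx.
- by rewrite /fiber !inE eqxx.
- apply/eqP => /setP/(_ i).
  by rewrite /fiber !inE eqxx /label nth_i nth_j eq_sym (negbTE label_uv).
- exact: leq_ltn_trans (leq0n _) lt_u.
congr (_ * _)%R.
  rewrite merge_preim_partition /label ?nth_i ?nth_j //.
  apply: wt_preim => [|k|k k']; first exact: size_map.
    by rewrite ffunE /face (nth_map leg0).
  by rewrite /label !(nth_map leg0).
have [_ tiP _] := and3P (partition_part_of s).
rewrite (sub_part_subset _ _ _ tiP); first last.
- apply/subsetP => k /setUP[] k_in; apply/bigcupP.
    by exists (fiber i); rewrite ?set21.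
  by exists (fiber j); rewrite ?set22.
- by apply/subsetP => B /set2P[] ->; apply: fiber_part.
have -> : fiber i :|: fiber j = [set k : 'I_(size s) | (nth leg0 s k).2 \in [:: u.2; v.2]].
  by apply/setP => k; rewrite /fiber !inE /label nth_i nth_j !(eq_sym _ (nth leg0 s k).2).
by rewrite wt_sub_legs (sub_legs_filter s (fun w => w.2 \in [:: u.2; v.2])).
Qed.

Lemma wt_collapse_head x y r : x.2 = y.2 -> wt alpha (x :: y :: r) = wt alpha (y :: r).
Proof.
by case: x y => a l [b l'] /= ->; rewrite (wt_face_head a b); apply: (wt_dup [::]).
Qed.

Lemma wt_collapse_last r x y :
  x.2 = y.2 -> wt alpha (rcons (rcons r x) y) = wt alpha (rcons r y).
Proof.
case: x y => a l [b l'] /= ->; rewrite (wt_face_last _ b a) -!cats1 -catA /=.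
by rewrite (wt_dup r _ [::]) !cats1 (wt_face_last _ a b).
Qed.

Lemma wt_const_prefix u w r :
  all (fun w' => w'.2 == w.2) u -> wt alpha (u ++ w :: r) = wt alpha (w :: r).
Proof.
elim: u => [|x u IH] //= /andP[/eqP x_w all_u]; rewrite -IH //.
case: u all_u {IH} => [|y u] /=; first by rewrite wt_collapse_head.
by case/andP => /eqP y_w _; rewrite wt_collapse_head // x_w y_w.
Qed.

Lemma wt_two_runs u v l l' : l != l' -> u != [::] -> v != [::] ->
  all (fun w => w.2 == l) u -> all (fun w => w.2 == l') v -> wt alpha (u ++ v) = 1%R.
Proof.
move=> ll'; case/lastP: u => [//|u w] _; case/lastP: v => [//|v w'] _.
rewrite !all_rcons => /andP[/eqP w_l u_l] /andP[/eqP w'_l' v_l'].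
rewrite cat_rcons wt_const_prefix; last by apply/allP => x /(allP u_l); rewrite w_l.
elim/last_ind: v v_l' => [_|v x IH]; first by rewrite wt_pair // w_l w'_l'.
rewrite all_rcons => /andP[/eqP x_l' v_l'].
by rewrite -!rcons_cons wt_collapse_last ?x_l' ?w'_l' // rcons_cons IH.
Qed.

(* Cut the block of [z] just after [z], into the fresh block [l]: (iv) at
   the legs [z], [(z.1, l)] gives back the original list, with [z] doubled,
   times a weight of two consecutive runs, which is 1. *)
Lemma wt_split_block p z b l : l \notin map snd (p ++ z :: b) ->
  wt alpha (p ++ z :: b) = wt alpha (p ++ z :: (z.1, l) :: relabel z.2 l b).
Proof.
rewrite map_cat mem_cat /= inE !negb_or => /and3P[l_p l_z l_b].
rewrite (wt_factor p z (z.1, l)) 1?eq_sym //=.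
have -> : relabel l z.2 (p ++ z :: (z.1, l) :: relabel z.2 l b) = p ++ z :: z :: b.
  rewrite /relabel map_cat /= eqxx if_same -surjective_pairing.
  by rewrite -/(relabel l z.2 p) -/(relabel l z.2 (relabel z.2 l b)) relabel_id // relabelK.
have -> : restrict_blocks [:: z.2; l] (p ++ z :: (z.1, l) :: relabel z.2 l b) =
    rcons (restrict_blocks [:: z.2; l] p) z ++
    (z.1, l) :: restrict_blocks [:: z.2; l] (relabel z.2 l b).
  by rewrite /restrict_blocks filter_cat /= !inE !eqxx orbT cat_rcons.
rewrite wt_dup (@wt_two_runs (rcons _ z) _ z.2 l) ?mulr1 //.
- by rewrite eq_sym.
- by case: (restrict_blocks _ p).
- apply/allP => w; rewrite mem_rcons inE mem_filter !inE => /orP[/eqP -> //|].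
  by case/andP => /orP[//|/eqP wl /(map_f snd)]; rewrite wl (negbTE l_p).
- apply/allP => w; rewrite inE mem_filter !inE => /orP[/eqP -> //|].
  have z_out : z.2 \notin map snd (relabel z.2 l b) by apply: relabel_notin; rewrite eq_sym.
  by case/andP => /orP[/eqP wz /(map_f snd)|//]; rewrite wz (negbTE z_out).
Qed.

Lemma wt_relabel_prefix l l' u w r : all (fun w' => w'.2 \in [:: l; l']) (rcons u w) ->
  wt alpha (relabel l' l (u ++ w :: r)) = wt alpha (relabel l' l (w :: r)).
Proof.
have merged k : k \in [:: l; l'] -> (if k == l' then l else k) = l.
  by rewrite !inE => /orP[] /eqP ->; rewrite ?eqxx //; case: eqP.
rewrite all_rcons => /andP[w_in u_in]; rewrite /relabel map_cat wt_const_prefix //=.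
by apply/allP => _ /mapP[w' /(allP u_in) w'_in ->] /=; rewrite !merged.
Qed.

Lemma wt_factor_head x y t : x.2 != y.2 ->
  wt alpha (x :: y :: t) =
  (wt alpha (relabel y.2 x.2 ((y.1, x.2) :: y :: t)) *
   wt alpha (restrict_blocks [:: x.2; y.2] ((y.1, x.2) :: y :: t)))%R.
Proof.
by case: x => a l /= xy; rewrite (wt_face_head a y.1); apply: (wt_factor [::] (y.1, l) y t).
Qed.

End AdmissibleWeight.

(** * Uniqueness *)

Lemma nblocks_gt1 x y t : x.2 != y.2 -> 1 < nblocks (x :: y :: t).
Proof.
move=> xy; apply: (@uniq_leq_size _ [:: x.2; y.2]); first by rewrite /= inE xy.
by move=> l; rewrite mem_undup !inE => /orP[] /eqP ->; rewrite eqxx ?orbT.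
Qed.

Lemma labels_two_blocks x y t : x.2 != y.2 -> nblocks (x :: y :: t) = 2 ->
  all (fun w => w.2 \in [:: x.2; y.2]) t.
Proof.
move=> xy two; have sub_xy : {subset [:: x.2; y.2] <= undup (map snd (x :: y :: t))}.
  by move=> l; rewrite mem_undup !inE => /orP[] /eqP ->; rewrite eqxx ?orbT.
have uniq_xy : uniq [:: x.2; y.2] by rewrite /= inE xy.
have [_ eq_xy] := uniq_min_size uniq_xy sub_xy (eq_leq two).
by apply/allP => w wt; rewrite eq_xy mem_undup; apply: map_f; rewrite !inE wt !orbT.
Qed.

Lemma split_second_occurrence (P : pred leg) t : 1 < count P t ->
  exists a z b, [/\ t = a ++ z :: b, P z & has P b].
Proof.
elim: t => [|w t IH] //=; case: (boolP (P w)) => Pw /=.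
  by rewrite add1n ltnS -has_count => Pt; exists [::], w, t.
by rewrite add0n => /IH[a [z [b [-> Pz Pb]]]]; exists (w :: a), z, b.
Qed.

Lemma two_blocks_repeat l1 l2 (t : seq leg) :
  l1 != l2 -> all (fun w => w.2 \in [:: l1; l2]) t -> 2 < size t ->
  exists l a z b,
  [/\ l \in [:: l1; l2], t = a ++ z :: b, z.2 = l & has (fun w => w.2 == l) b].
Proof.
move=> l12 labels_t big.
have count_t : count (fun w => w.2 == l1) t + count (fun w => w.2 == l2) t = size t.
  rewrite -(count_predC (fun w => w.2 == l1)); congr (_ + _).
  apply: eq_in_count => w /(allP labels_t); rewrite !inE /=.
  by case/orP => /eqP ->; rewrite ?eqxx ?(negbTE l12) // eq_sym.
have [l [l_in twice]] : exists l, l \in [:: l1; l2] /\ 1 < count (fun w => w.2 == l) t.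
  case: (ltnP 1 (count (fun w => w.2 == l1) t)) => [c1|c1]; [exists l1 | exists l2];
    rewrite !inE eqxx ?orbT; split=> //; lia.
have [a [z [b [-> /eqP z_l b_l]]]] := split_second_occurrence _ _ twice.
by exists l, a, z, b.
Qed.

Section Uniqueness.
Context {alpha beta : weight_family F C}.
Hypotheses (adm_alpha : admissible alpha) (adm_beta : admissible beta).
Hypothesis agree_small :
  forall s, 0 < size s <= 4 -> nblocks s = 2 -> wt alpha s = wt beta s.

Lemma agree_many_blocks x y t : x.2 != y.2 -> 2 < nblocks (x :: y :: t) ->
  (forall s, 0 < size s < size (x :: y :: t) -> wt alpha s = wt beta s) ->
  (forall s, size s = size (x :: y :: t) -> nblocks s < nblocks (x :: y :: t) ->
     wt alpha s = wt beta s) ->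
  wt alpha (x :: y :: t) = wt beta (x :: y :: t).
Proof.
move=> xy many shorter fewer.
rewrite (wt_factor_head adm_alpha) // (wt_factor_head adm_beta) //; congr (_ * _)%R.
  apply: fewer; first exact: size_map.
  by apply: nblocks_relabel; rewrite ?inE ?eqxx ?orbT // eq_sym.
apply: shorter; apply/andP; split; first by rewrite /restrict_blocks /= mem_head.
exact/size_restrict_blocks_lt/has_label_notin.
Qed.

Lemma agree_two_blocks x y t : x.2 != y.2 -> nblocks (x :: y :: t) = 2 ->
  4 < size (x :: y :: t) ->
  (forall s, 0 < size s < size (x :: y :: t) -> wt alpha s = wt beta s) ->
  wt alpha (x :: y :: t) = wt beta (x :: y :: t).
Proof.
move=> xy two big shorter; have labels_t := labels_two_blocks _ _ _ xy two.
have [l [a [z [b [l_xy t_eq z_l b_l]]]]] := two_blocks_repeat _ _ _ xy labels_t big.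
pose l' := (x.2 + y.2).+1.
have l'_out : l' \notin [:: x.2; y.2] by rewrite !inE !gtn_eqF // ltnS ?leq_addl ?leq_addr.
have labels_all : all (fun w => w.2 \in [:: x.2; y.2]) [:: x, y & t].
  by rewrite /= !inE !eqxx orbT labels_t.
have fresh : l' \notin map snd (x :: y :: t).
  by apply/mapP => -[w /(allP labels_all) w_in l'_w]; rewrite l'_w w_in in l'_out.
pose s := (y.1, x.2) :: y :: a ++ z :: (z.1, l') :: relabel z.2 l' b.
have split_factor g : admissible g -> wt g (x :: y :: t) =
    (wt g (relabel y.2 x.2 s) * wt g (restrict_blocks [:: x.2; y.2] s))%R.
  move=> adm_g; rewrite t_eq -!cat_cons (wt_split_block adm_g _ _ _ l').
    exact: (wt_factor_head adm_g x y).
  by rewrite /= -t_eq.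
have size_t : size t = (size a + size b).+1 by rewrite t_eq size_cat addnS.
rewrite (split_factor _ adm_alpha) (split_factor _ adm_beta); congr (_ * _)%R.
  have prefix_in : all (fun w => w.2 \in [:: x.2; y.2]) (rcons [:: (y.1, x.2), y & a] z).
    move: labels_t; rewrite t_eq all_cat all_rcons /= => /and3P[all_a -> _].
    by rewrite all_a !inE !eqxx orbT.
  rewrite (wt_relabel_prefix adm_alpha _ _ [:: (y.1, x.2), y & a] z) //.
  rewrite (wt_relabel_prefix adm_beta _ _ [:: (y.1, x.2), y & a] z) //.
  by apply: shorter; rewrite /= !size_map size_t !ltnS leq_addl.
have -> : restrict_blocks [:: x.2; y.2] s =
    restrict_blocks [:: x.2; y.2] ((y.1, x.2) :: y :: a ++ z :: relabel z.2 l' b).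
  by rewrite /restrict_blocks /= !filter_cat /= (negbTE l'_out).
apply: shorter; apply/andP; split; first by rewrite /restrict_blocks /= mem_head.
rewrite (_ : size [:: x, y & t] = size ((y.1, x.2) :: y :: a ++ z :: relabel z.2 l' b)).
  apply/size_restrict_blocks_lt/hasP; case/hasP: b_l => w w_b /eqP w_l.
  have w_rb : (w.1, l') \in relabel z.2 l' b.
    by apply/mapP; exists w; rewrite // w_l z_l eqxx.
  by exists (w.1, l'); rewrite // !inE mem_cat inE w_rb !orbT.
by rewrite /= size_cat /= size_map size_t addnS.
Qed.

Lemma agree_step s : 0 < size s ->
  (forall s', 0 < size s' < size s -> wt alpha s' = wt beta s') ->
  (forall s', size s' = size s -> nblocks s' < nblocks s -> wt alpha s' = wt beta s') ->
  wt alpha s = wt beta s.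
Proof.
case: s => [//|x [|y t]] _ shorter fewer.
  by rewrite (wt_singleton adm_alpha) (wt_singleton adm_beta).
have [xy|xy] := eqVneq x.2 y.2.
  rewrite (wt_collapse_head adm_alpha) // (wt_collapse_head adm_beta) //.
  by apply: shorter; rewrite /= ltnSn.
have := nblocks_gt1 _ _ t xy; rewrite leq_eqVlt => /orP[/eqP two|many].
  have [small|big] := leqP (size (x :: y :: t)) 4; last exact: agree_two_blocks.
  exact: agree_small.
exact: agree_many_blocks.
Qed.

Lemma agree_wt s : 0 < size s -> wt alpha s = wt beta s.
Proof.
have [n] := ubnP (size s); elim: n s => // n IHn s lt_sn.
have [d] := ubnP (nblocks s); elim: d s lt_sn => // d IHd s lt_sn lt_sd s_gt0.
apply: agree_step => // s' => [/andP[s'_gt0 lt_s's]|s's lt_s'd].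
  exact: IHn (leq_trans lt_s's lt_sn) s'_gt0.
by apply: IHd; rewrite ?s's // (leq_trans lt_s'd lt_sd).
Qed.

End Uniqueness.

Definition encode {n} (f : {ffun 'I_n -> F}) (pi : {set {set 'I_n}}) : seq leg :=
  [seq (f i, index (pblock pi i) (enum pi)) | i <- enum 'I_n].

Lemma wt_encode (alpha : weight_family F C) n (f : {ffun 'I_n -> F}) pi :
  partition pi [set: 'I_n] -> alpha n f pi = wt alpha (encode f pi).
Proof.
move=> pi_part; have [/eqP cover_pi _ _] := and3P pi_part.
have nth_encode (i : 'I_n) :
    nth leg0 (encode f pi) i = (f i, index (pblock pi i) (enum pi)).
  by rewrite /encode (nth_map i) ?size_enum_ord // nth_ord_enum.
rewrite -{1}(preim_partition_pblock pi_part); apply: wt_preim => [|i|i j].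
- by rewrite size_map size_enum_ord.
- by rewrite /face nth_encode.
rewrite /label !nth_encode /=; apply/eqP/eqP => [-> //|eq_index].
by apply: (index_inj set0 _ _ eq_index); rewrite mem_enum pblock_mem // cover_pi inE.
Qed.
End Legs.

Theorem corollary6p4 (F : finType) (C : numClosedFieldType)
    (alpha beta : weight_family F C) :
  admissible alpha -> admissible beta ->
  (fam_eq alpha beta <->
   (forall n (f : {ffun 'I_n -> F}) (sigma : {set {set 'I_n}}),
      0 < n -> n <= 4 -> partition sigma [set: 'I_n] -> #|sigma| = 2 ->
      alpha n f sigma = beta n f sigma)).
Proof.
move=> adm_alpha adm_beta.
split=> [eq_ab n f sigma n_gt0 _ sigma_part _|small n f pi n_gt0 pi_part].
  exact: eq_ab.
pose x0 := f (Ordinal n_gt0).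
rewrite (wt_encode x0 alpha) // (wt_encode x0 beta) //.
apply: agree_wt => // [s /andP[s_gt0 s_le4] two|]; last by rewrite size_map size_enum_ord.
by apply: small; rewrite ?partition_part_of ?card_part_of.
Qed.
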